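(* In the setting of the context, let $r\in\mathcal{R}$ with $U_{>r}\ne\emptyset$, and let $r'$ be the smallest integer bigger than $r$ such that $U_{r'}$ is nonempty. Then: (1) if $r=0$, then $\Delta^\omega_r=\Delta^\omega_{r'}$; (2) $\Delta^\omega_r\le\Delta^\omega_{r'}$; (3) $\Delta^\omega_r-r\ge\Delta^\omega_{r'}-r'$.
   Context: $k$ is a global field, all extensions lie in a separable closure. $p$ is a prime, $m\ge2$, $K_0,\dots,K_m$ are cyclic extensions of $k$ with $[K_i:k]=p^{\epsilon_i}$, $\epsilon_0\le\epsilon_i$ for all $i$, $\bigcap_{i=0}^mK_i=k$, and $K_j\not\subseteq K_i$ for $i\ne j$. $\mathcal{I}=\{1,\dots,m\}$. $K_i(d)$ ($0\le d\le\epsilon_i$) is the subfield of $K_i$ of degree $p^d$; $p^{e_{0,i}}=[K_0\cap K_i:k]$. $U_r=\{i\in\mathcal I:e_{0,i}=r\}$, $U_{>r}=\{i:e_{0,i}>r\}$, $U_{<r}=\{i:e_{0,i}<r\}$, $\mathcal R=\{r:U_r\ne\emptyset\}$. For nonempty $C\subseteq\mathcal I$, $M_C(d)$ is the compositum of the $K_i(d)$, $i\in C$. The algebraic patching degree $\Delta^\omega_r$ of $U_r$ is $\epsilon_0$ if $U_r=\mathcal I$, and otherwise the largest integer $0\le d\le\epsilon_0$ such that (1) if $U_{>r}\ne\emptyset$ then $M_{U_{>r}}(d)\subseteq\bigcap_{i\in U_r}K_0(d)K_i(d)$, and (2) if $U_{<r}\ne\emptyset$ then $M_{U_r}(d)\subseteq\bigcap_{i\in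 U_{<r}}K_0(d)K_i(d)$. *)

From HB Require Import structures.
From mathcomp Require Import all_boot all_order all_algebra all_fingroup all_solvable all_field.
Set Implicit Arguments. Unset Strict Implicit. Unset Printing Implicit Defensive.
Import GRing.Theory.

(* Setting: k = the base field F; everything lives in a finite normal extension
   L of F (any finite Galois extension of k containing all the K_i, e.g. their
   compositum inside the separable closure).  Indices 0..m are natural numbers;
   K i = K_i, Kd i d = K_i(d) (the subfield of K_i of degree p^d).
   Composita of subfields are products of subspaces (prodv), which for subfields
   of a field is exactly the compositum. *)
Section Patching.
Variables (F : fieldType) (L : fieldExtType F).
Variables (p m : nat) (K : nat -> {subfield L}) (Kd : nat -> nat -> {subfield L}).
Variable eps0 : nat.

Local Open Scope vspace_scope.

Definition e0 (i : nat) : nat := logn p (\dim (K 0 :&: K i)).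

Definition Iset : seq nat := iota 1 m.
Definition Ueq (r : nat) : seq nat := [seq i <- Iset | e0 i == r].
Definition Ugt (r : nat) : seq nat := [seq i <- Iset | r < e0 i].
Definition Ult (r : nat) : seq nat := [seq i <- Iset | e0 i < r].

Definition MC (C : seq nat) (d : nat) : {vspace L} :=
  \big[@prodv F L/1%VS]_(i <- C) (Kd i d : {vspace L}).

Definition capK0 (C : seq nat) (d : nat) : {vspace L} :=
  \bigcap_(i <- C) (Kd 0 d * Kd i d).

Definition patch_cond (r d : nat) : bool :=
  ((Ugt r != [::]) ==> (MC (Ugt r) d <= capK0 (Ueq r) d)) &&
  ((Ult r != [::]) ==> (MC (Ueq r) d <= capK0 (Ult r) d)).

Definition Delta (r : nat) : nat :=
  if all (fun i => e0 i == r) Iset then eps0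
  else (\max_(d < eps0.+1 | patch_cond r d) (d : nat))%N.

End Patching.

From HB Require Import structures.
From mathcomp Require Import all_boot all_order all_algebra all_fingroup all_solvable all_field.
From mathcomp Require Import zify.
Import GRing.Theory Num.Theory.

Set Implicit Arguments. Unset Strict Implicit. Unset Printing Implicit Defensive.

(* All fields involved are Galois over F, so they lie in the separable closure E
   of F in L and inclusions between them can be read off the Galois
   correspondence for Gal(E/F).  Two facts drive the proof:
   [K_0(a) K_i(b) : F] = p^(a + b - min(a, b, e_{0,i})), and, since K_l(b) is
   cyclic over F, a field between X and X K_l(b) is determined by its degree.

   When U_r is nonempty, the patching condition at level r and degree d says
   exactly that K_j(d) <= K_0(d) K_i(d) whenever e_{0,i} <= r <= e_{0,j} and
   e_{0,i} < e_{0,j}.  This condition is monotone in r, which gives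
   Delta_r <= Delta_r'; for r = 0 the absence of levels strictly between r and
   r' makes the condition at r' imply the one at r.  For the last inequality,
   the condition at r' in degree n implies the one at r in degree n - r' + r,
   because K_0(n) K_i(n - r' + r) = K_0(n) K_k(n) when e_{0,i} = r and
   e_{0,k} = r': both fields lie between K_0(n) and K_0(n) K_i(n) and have the
   same degree. *)

Section SeparableClosure.
Variables (F : fieldType) (L : splittingFieldType F).

Definition sep_closure : {subfield L} := <<1; separable_generator 1 fullv>>%AS.

Lemma mem_sep_closure x : separable_element 1 x -> x \in sep_closure.
Proof.
move=> sepx; rewrite -separable_inseparable_element.
rewrite (separable_elementS (sub1v _) sepx).
exact: (purely_inseparableP (separable_generator_maximal fullv 1%AS)) x (memvf x).
Qed.

Lemma galois_sep_closure : galois 1 sep_closure.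
Proof.
have sepS : separable 1 sep_closure.
  by rewrite -adjoin_separable_eq separable_generatorP.
rewrite /galois sub1v sepS; apply/normalFieldP => a Sa.
have [r /eqP Dr] := splitting_field_normal 1 a.
exists r => //; apply/allP => b rb; apply: mem_sep_closure.
apply/separable_elementP; exists (minPoly 1 a); split.
- exact: minPolyOver.
- by rewrite Dr root_prod_XsubC.
- exact: (separableP sepS) a Sa.
Qed.

Lemma galois_sub_sep_closure (K : {subfield L}) : galois 1 K -> (K <= sep_closure)%VS.
Proof.
case/and3P=> _ sepK _; apply/subvP => x Kx.
exact/mem_sep_closure/(separableP sepK).
Qed.

End SeparableClosure.

Section CyclicQuotient.
Local Open Scope group_scope.

Lemma cardSg_cyclic_quotient (gT : finGroupType) (G N A B : {group gT}) :
  G \subset 'N(N) -> cyclic (G / N) ->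
  N \subset A -> N \subset B -> A \subset G -> B \subset G ->
  #|B| %| #|A| -> B \subset A.
Proof.
move=> nNG cycGN sNA sNB sAG sBG dvdBA.
have nNA := subset_trans sAG nNG; have nNB := subset_trans sBG nNG.
rewrite -(quotientSGK nNB sNA) -(cardSg_cyclic cycGN) ?quotientS //.
by rewrite !card_quotient // -(dvdn_pmul2l (cardG_gt0 N)) !Lagrange.
Qed.

End CyclicQuotient.

Lemma cyclic_galois_subfield (F : fieldType) (L : splittingFieldType F) (Y M : {subfield L}) :
  galois 1 Y -> cyclic 'Gal(Y / 1) -> (M <= Y)%VS -> galois 1 M && cyclic 'Gal(M / 1).
Proof.
move=> galY cycY sMY.
have s1MY : (1 <= M <= Y)%VS by rewrite sub1v.
have galMY : galois M Y by apply: galoisS galY.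
have nGal : ('Gal(Y / M) <| 'Gal(Y / 1))%g.
  by rewrite -sub_abelian_normal ?cyclic_abelian ?galS ?sub1v.
have galM : galois 1 M.
  by rewrite -(galois_fixedField galMY); apply: normal_fixedField_galois.
rewrite galM /=; have [_ _ nM] := and3P galM.
rewrite -(isog_cyclic (normalField_isog galY s1MY nM)).
exact: quotient_cyclic.
Qed.

Section GaloisCorrespondence.
Local Open Scope group_scope.
Variables (F : fieldType) (L : splittingFieldType F) (E : {subfield L}).
Hypothesis galE : galois 1 E.

Lemma galois_sub (X : {subfield L}) : (X <= E)%VS -> galois X E.
Proof. by move=> sXE; apply: galoisS galE; rewrite sub1v. Qed.

Lemma fixedField_gal (X : {subfield L}) : (X <= E)%VS -> fixedField 'Gal(E / X) = X.
Proof. by move=> sXE; apply/galois_fixedField/galois_sub. Qed.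

Lemma gal_subset (X Y : {subfield L}) : (X <= E)%VS -> (Y <= E)%VS ->
  ('Gal(E / Y) \subset 'Gal(E / X)) = (X <= Y)%VS.
Proof. by move=> sXE sYE; rewrite galois_connection // fixedField_gal. Qed.

Lemma gal_prodv (X Y : {subfield L}) : (X <= E)%VS -> (Y <= E)%VS ->
  'Gal(E / (X * Y)%VS) = ('Gal(E / X) :&: 'Gal(E / Y))%g.
Proof.
move=> sXE sYE; apply/eqP; rewrite eqEsubset subsetI !galS ?field_subvMr ?field_subvMl //=.
rewrite galois_connection; last exact: prodv_sub.
apply: (@prodv_sub _ _ _ _ (fixedField_aspace _));
  by rewrite -galois_connection ?subsetIl ?subsetIr.
Qed.

Lemma gal_capv (X Y : {subfield L}) : (X <= E)%VS -> (Y <= E)%VS ->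
  'Gal(E / (X :&: Y)%VS) = ('Gal(E / X) <*> 'Gal(E / Y))%g.
Proof.
move=> sXE sYE; have sXYE : (X :&: Y <= E)%VS by rewrite (subv_trans (capvSl _ _)).
suff -> : (X :&: Y)%VS = fixedField ('Gal(E / X) <*> 'Gal(E / Y))%g by rewrite gal_fixedField.
apply/eqP; rewrite eqEsubv -galois_connection //= join_subG !galS ?capvSl ?capvSr //=.
rewrite subv_cap; apply/andP; split.
  by rewrite -{2}(fixedField_gal sXE) fixedFieldS ?joing_subl.
by rewrite -{2}(fixedField_gal sYE) fixedFieldS ?joing_subr.
Qed.

Lemma card_gal_dim (X : {subfield L}) : (X <= E)%VS -> (#|'Gal(E / X)| * \dim X)%N = \dim E.
Proof. by move=> sXE; rewrite -galois_dim ?galois_sub // -dim_sup_field. Qed.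

Lemma gal_normal (Y : {subfield L}) : (Y <= E)%VS -> galois 1 Y -> ('Gal(E / Y) <| 'Gal(E / 1))%g.
Proof. by move=> sYE /and3P[_ _ nY]; apply: normalField_normal nY; rewrite sub1v. Qed.

Lemma dim_prodv_capv (X Y : {subfield L}) : (X <= E)%VS -> (Y <= E)%VS -> galois 1 Y ->
  (\dim (X * Y) * \dim (X :&: Y) = \dim X * \dim Y)%N.
Proof.
move=> sXE sYE galY.
have nYX : ('Gal(E / X) \subset 'N('Gal(E / Y)))%g.
  by rewrite (subset_trans (galS _ (sub1v _))) ?normal_norm ?gal_normal.
have cardXY := card_gal_dim (prodv_sub sXE sYE : (X * Y)%AS <= E)%VS.
have cardXcapY := card_gal_dim (subv_trans (capvSl X Y) sXE : (X :&: Y)%AS <= E)%VS.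
rewrite /= gal_prodv // in cardXY; rewrite /= gal_capv // norm_joinEl // in cardXcapY.
have cardGG := mul_cardG 'Gal(E / X) 'Gal(E / Y).
have gt0 : (0 < #|'Gal(E / X)| * #|'Gal(E / Y)|)%N by rewrite muln_gt0 !cardG_gt0.
apply/eqP; rewrite -(eqn_pmul2l gt0) [X in _ == X]mulnACA card_gal_dim // card_gal_dim //.
by rewrite cardGG [(\dim (X * Y) * _)%N]mulnC mulnACA cardXY cardXcapY.
Qed.

Lemma dvdn_card_gal (A B : {subfield L}) : (A <= E)%VS -> (B <= E)%VS ->
  (\dim A %| \dim B)%N -> (#|'Gal(E / B)| %| #|'Gal(E / A)|)%N.
Proof.
move=> sAE sBE /dvdnP[k dimB]; apply/dvdnP; exists k; apply/eqP.
rewrite -(eqn_pmul2r (adim_gt0 A)) card_gal_dim // -(card_gal_dim sBE) dimB.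
by rewrite mulnA [(#|_| * k)%N]mulnC.
Qed.

Lemma cyclic_gal_prodv (X Y : {subfield L}) : (X <= E)%VS -> (Y <= E)%VS ->
  galois 1 Y -> cyclic 'Gal(Y / 1) -> cyclic ('Gal(E / X) / 'Gal(E / (X * Y)%VS)).
Proof.
move=> sXE sYE galY cycY; have [_ _ nY] := and3P galY.
have sX1 : 'Gal(E / X) \subset 'Gal(E / 1) by apply: galS; apply: sub1v.
have nYX := subset_trans sX1 (normal_norm (gal_normal sYE galY)).
rewrite gal_prodv // setIC (isog_cyclic (second_isog nYX)).
apply: cyclicS (quotientS _ sX1) _.
by rewrite (isog_cyclic (normalField_isog galE _ nY)) ?sub1v.
Qed.

Lemma subv_prodv_cyclic (X Y V W : {subfield L}) :
  (X <= E)%VS -> (Y <= E)%VS -> galois 1 Y -> cyclic 'Gal(Y / 1) ->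
  (V <= X * Y)%VS -> (W <= X * Y)%VS -> (\dim (X * V) %| \dim (X * W))%N ->
  (V <= X * W)%VS.
Proof.
move=> sXE sYE galY cycY sVXY sWXY dvdXVW.
have sXYE : ((X * Y)%AS <= E)%VS by apply: prodv_sub.
have sXVXY : ((X * V)%AS <= X * Y)%VS by apply: prodv_sub; rewrite ?field_subvMr.
have sXWXY : ((X * W)%AS <= X * Y)%VS by apply: prodv_sub; rewrite ?field_subvMr.
have [sXVE sXWE] := (subv_trans sXVXY sXYE, subv_trans sXWXY sXYE).
have sX1 : 'Gal(E / X) \subset 'Gal(E / 1) by apply: galS; apply: sub1v.
apply: subv_trans (field_subvMl X V) _; rewrite -gal_subset //.
apply: (@cardSg_cyclic_quotient _ 'Gal(E / X) 'Gal(E / (X * Y)%VS)).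
- rewrite /= gal_prodv // normsI ?normG //.
  exact: subset_trans sX1 (normal_norm (gal_normal sYE galY)).
- exact: cyclic_gal_prodv.
- exact: galS.
- exact: galS.
- by apply: galS; rewrite field_subvMr.
- by apply: galS; rewrite field_subvMr.
- exact: dvdn_card_gal.
Qed.

Lemma dvdn_dim_prodv (X V W : {subfield L}) :
  (X <= E)%VS -> (V <= E)%VS -> (W <= E)%VS -> galois 1 V -> galois 1 W ->
  (X :&: W <= V)%VS -> \dim V = \dim W -> (\dim (X * V) %| \dim (X * W))%N.
Proof.
move=> sXE sVE sWE galV galW sXWV dimVW.
have sXW_XV : ((X :&: W)%AS <= X :&: V)%VS by rewrite subv_cap capvSl.
rewrite -(dvdn_pmul2r (adim_gt0 (X :&: W)%AS)) [X in (_ %| X)%N]dim_prodv_capv //.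
rewrite -dimVW -(dim_prodv_capv sXE sVE galV) dvdn_pmul2l ?adim_gt0 //.
exact: field_dimS.
Qed.

End GaloisCorrespondence.

Lemma subv_prodv_trans (F : fieldType) (L : fieldExtType F)
    (X Y Z : {subfield L}) (A : {vspace L}) :
  (A <= X * Y)%VS -> (Y <= X * Z)%VS -> (A <= X * Z)%VS.
Proof.
move=> sAXY sYXZ; apply: subv_trans sAXY _.
by apply: (@prodv_sub _ _ _ _ (X * Z)%AS); rewrite ?field_subvMr.
Qed.

Section CyclicTower.
Variables (F : fieldType) (L : splittingFieldType F).
Variables (p m : nat) (K : nat -> {subfield L}) (eps : nat -> nat).
Variable Kd : nat -> nat -> {subfield L}.
Hypothesis p_prime : prime p.
Hypothesis K_cyclic : forall i, i <= m -> galois 1%VS (K i) && cyclic ('Gal(K i / 1%VS))%g.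
Hypothesis dim_K : forall i, i <= m -> \dim (K i) = p ^ eps i.
Hypothesis eps0_min : forall i, i <= m -> eps 0 <= eps i.
Hypothesis Kd_spec : forall i d, i <= m -> d <= eps i ->
  (Kd i d <= K i)%VS /\ \dim (Kd i d) = p ^ d.

Local Notation E := (sep_closure L).
Local Notation e := (e0 p K).
Let galE := galois_sep_closure L.

Lemma K_sep i : i <= m -> (K i <= E)%VS.
Proof. by case/K_cyclic/andP => galK _; apply: galois_sub_sep_closure. Qed.

(* Kd i d is only specified for d <= eps i; every degree used below is at most eps 0. *)
Lemma Kd_sub i d : i <= m -> d <= eps 0 -> (Kd i d <= K i)%VS.
Proof. by move=> im dn; case: (Kd_spec im (leq_trans dn (eps0_min im))). Qed.

Lemma dim_Kd i d : i <= m -> d <= eps 0 -> \dim (Kd i d) = p ^ d.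
Proof. by move=> im dn; case: (Kd_spec im (leq_trans dn (eps0_min im))). Qed.

Lemma Kd_sep i d : i <= m -> d <= eps 0 -> (Kd i d <= E)%VS.
Proof. by move=> im dn; apply: subv_trans (Kd_sub im dn) (K_sep im). Qed.

Lemma Kd_galois i d : i <= m -> d <= eps 0 -> galois 1 (Kd i d).
Proof.
move=> im dn; have /andP[galK cycK] := K_cyclic im.
by case/andP: (cyclic_galois_subfield galK cycK (Kd_sub im dn)).
Qed.

Lemma Kd_cyclic i d : i <= m -> d <= eps 0 -> cyclic ('Gal(Kd i d / 1%VS))%g.
Proof.
move=> im dn; have /andP[galK cycK] := K_cyclic im.
by case/andP: (cyclic_galois_subfield galK cycK (Kd_sub im dn)).
Qed.

Lemma subv_K_dvdn i (A B : {subfield L}) : i <= m -> (A <= K i)%VS -> (B <= K i)%VS ->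
  \dim A %| \dim B -> (A <= B)%VS.
Proof.
move=> im sAK sBK dvdAB; have /andP[galK cycK] := K_cyclic im.
rewrite -[B : {vspace L}]prod1v.
by apply: (subv_prodv_cyclic galE (sub1v _) (K_sep im)); rewrite ?prod1v.
Qed.

Lemma Kd_subv i a b : i <= m -> a <= eps 0 -> b <= eps 0 ->
  (Kd i a <= Kd i b)%VS = (a <= b).
Proof.
move=> im an bn; apply/idP/idP => [/field_dimS | ab].
  by rewrite !dim_Kd // dvdn_Pexp2l ?prime_gt1.
by apply: (subv_K_dvdn im); rewrite ?Kd_sub ?dim_Kd ?dvdn_exp2l.
Qed.

Lemma Kd_uniq i a (A : {subfield L}) : i <= m -> a <= eps 0 ->
  (A <= K i)%VS -> \dim A = p ^ a -> A = Kd i a :> {vspace L}.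
Proof.
move=> im an sAK dimA; apply/eqP; rewrite eqEsubv.
by apply/andP; split; apply: (subv_K_dvdn im); rewrite ?Kd_sub ?dim_Kd ?dimA.
Qed.

Lemma subfield_K0 (A : {subfield L}) : (A <= K 0)%VS ->
  exists2 a, a <= eps 0 & A = Kd 0 a :> {vspace L}.
Proof.
move=> sAK; have /dvdn_pfactor[//|a an dimA] : \dim A %| p ^ eps 0.
  by rewrite -dim_K // field_dimS.
by exists a => //; apply: Kd_uniq.
Qed.

Lemma e_le_eps i : i <= m -> e i <= eps 0.
Proof.
move=> im; rewrite /e0 -(pfactorK (eps 0) p_prime) -dim_K //.
by rewrite dvdn_leq_log ?adim_gt0 // field_dimS ?capvSl.
Qed.

Lemma capK_Kd0 i : i <= m -> (K 0 :&: K i)%VS = Kd 0 (e i).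
Proof.
move=> im; have [a an Ca] := @subfield_K0 (K 0 :&: K i)%AS (capvSl _ _).
by rewrite /e0 /= Ca dim_Kd // pfactorK.
Qed.

Lemma Kd0_eq i t : i <= m -> t <= e i -> Kd 0 t = Kd i t :> {vspace L}.
Proof.
move=> im tei; have tn := leq_trans tei (e_le_eps im).
apply: Kd_uniq; rewrite ?dim_Kd //.
by apply: subv_trans (capvSr (K 0) (K i)); rewrite capK_Kd0 // Kd_subv ?e_le_eps.
Qed.

Lemma capv_Kd0 i a b : i <= m -> a <= eps 0 -> b <= eps 0 ->
  (Kd 0 a :&: Kd i b)%VS = Kd 0 (minn a (minn b (e i))).
Proof.
move=> im an bn; set C := (Kd 0 a :&: Kd i b)%AS.
have sCK0 : (C <= K 0)%VS by apply: subv_trans (capvSl _ _) (Kd_sub _ an).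
have [s sn Cs] := subfield_K0 sCK0.
have Cs' : C = Kd i s :> {vspace L}.
  apply: Kd_uniq; rewrite ?Cs ?dim_Kd //.
  by rewrite -Cs; apply: subv_trans (capvSr _ _) (Kd_sub im bn).
have sa : s <= a by rewrite -(Kd_subv (leq0n m)) // -Cs capvSl.
have sb : s <= b by rewrite -(Kd_subv im) // -Cs' capvSr.
have se : s <= e i.
  by rewrite -(Kd_subv (leq0n m)) ?e_le_eps // -capK_Kd0 // -Cs capvS ?Kd_sub.
set t := minn a (minn b (e i)).
have ta : t <= a by rewrite /t; lia.
have tb : t <= b by rewrite /t; lia.
have tei : t <= e i by rewrite /t; lia.
have ts : t <= s.
  rewrite -(Kd_subv (leq0n m)) ?(leq_trans ta) // -Cs subv_cap Kd_subv ?(leq_trans ta) //=.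
  by rewrite (Kd0_eq im tei) Kd_subv ?(leq_trans tb).
by rewrite /= Cs; congr (Kd 0 _ : {vspace L}); lia.
Qed.

Lemma dim_prodv_Kd0 i a b : i <= m -> a <= eps 0 -> b <= eps 0 ->
  \dim (Kd 0 a * Kd i b) = p ^ (a + b - minn a (minn b (e i))).
Proof.
move=> im an bn.
have := dim_prodv_capv galE (Kd_sep (leq0n m) an) (Kd_sep im bn) (Kd_galois im bn).
rewrite capv_Kd0 // !dim_Kd ?geq_min ?an // -expnD => dimM.
rewrite expnB ?prime_gt0 -?dimM ?mulnK ?expn_gt0 ?prime_gt0 //; lia.
Qed.

Lemma subv_prodv_Kd0 j l i a b c c' : j <= m -> l <= m -> i <= m ->
  a <= eps 0 -> b <= eps 0 -> c <= eps 0 -> c' <= eps 0 ->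
  a + c - minn a (minn c (e j)) <= a + c' - minn a (minn c' (e i)) ->
  (Kd j c <= Kd 0 a * Kd l b)%VS -> (Kd i c' <= Kd 0 a * Kd l b)%VS ->
  (Kd j c <= Kd 0 a * Kd i c')%VS.
Proof.
move=> jm lm im an bn cn c'n le_exp sV sW.
apply: (subv_prodv_cyclic galE (Kd_sep (leq0n m) an) (Kd_sep lm bn)
  (Kd_galois lm bn) (Kd_cyclic lm bn)) => //.
by rewrite !dim_prodv_Kd0 // dvdn_exp2l.
Qed.

Lemma subv_prodv_Kd0_descend x j a d n : x <= m -> j <= m -> a <= eps 0 -> d <= n -> n <= eps 0 ->
  minn d (minn a (e x)) <= e j ->
  (Kd j d <= Kd x a * Kd 0 n)%VS -> (Kd j d <= Kd x a * Kd 0 d)%VS.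
Proof.
move=> xm jm an dn nn te sV; have dn0 := leq_trans dn nn.
have m0 := leq0n m.
apply: (subv_prodv_cyclic galE (Kd_sep xm an) (Kd_sep m0 nn)
  (Kd_galois m0 nn) (Kd_cyclic m0 nn)) => //.
  by apply: subv_trans _ (field_subvMl _ _); rewrite Kd_subv.
apply: (@dvdn_dim_prodv _ _ E); rewrite ?Kd_sep ?Kd_galois ?dim_Kd //.
rewrite capvC capv_Kd0 // (Kd0_eq jm te) Kd_subv ?geq_min ?leqnn //.
by rewrite dn0.
Qed.

Lemma Iset_le i : i \in Iset m -> i <= m.
Proof. by rewrite mem_iota add1n ltnS => /andP[]. Qed.

Lemma Ueq_witness r : Ueq p m K r != [::] -> exists2 k, k \in Iset m & e k = r.
Proof.
case Ur: (Ueq p m K r) => [|k s] // _; have : k \in Ueq p m K r by rewrite Ur mem_head.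
by rewrite mem_filter => /andP[/eqP ekr kI]; exists k.
Qed.

Lemma one_MC C d : (1 <= MC Kd C d)%VS.
Proof.
elim: C => [|j C IH]; rewrite /MC ?big_nil ?big_cons ?subvv //.
by apply: subv_trans (prodvS (sub1v (Kd j d)) IH); rewrite prodv1.
Qed.

Lemma MC_subE C d (V : {subfield L}) :
  (MC Kd C d <= V)%VS = all (fun j => Kd j d <= V)%VS C.
Proof.
elim: C => [|j C IH]; first by rewrite /MC big_nil sub1v.
rewrite /= -IH /MC big_cons -/(MC Kd C d).
apply/idP/andP => [sMV | [sKV sMV]]; last exact: prodv_sub.
split; apply: subv_trans sMV.
  by apply: subv_trans (prodvSr _ (one_MC C d)); rewrite prodv1.
by apply: subv_trans (prodvSl _ (sub1v (Kd j d))); rewrite prod1v.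
Qed.

Lemma subv_capK0E (X : {vspace L}) C d :
  (X <= capK0 Kd C d)%VS = all (fun i => X <= Kd 0 d * Kd i d)%VS C.
Proof.
elim: C => [|i C IH]; first by rewrite /capK0 big_nil subvf.
by rewrite /capK0 big_cons subv_cap -/(capK0 Kd C d) IH.
Qed.

Lemma MC_capK0P C C' d : reflect
  (forall j i, j \in C -> i \in C' -> (Kd j d <= Kd 0 d * Kd i d)%VS)
  (MC Kd C d <= capK0 Kd C' d)%VS.
Proof.
rewrite subv_capK0E; apply: (iffP allP) => [sMK j i jC iC | sKK i iC].
  by move: (sMK i iC); rewrite (MC_subE _ _ (Kd 0 d * Kd i d)%AS) => /allP; apply.
by rewrite (MC_subE _ _ (Kd 0 d * Kd i d)%AS); apply/allP => j jC; apply: sKK.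
Qed.

Definition patch_span r d := forall j i, j \in Iset m -> i \in Iset m ->
  e i <= r <= e j -> e i < e j -> (Kd j d <= Kd 0 d * Kd i d)%VS.

Lemma patch_span_cond r d : patch_span r d -> patch_cond p m K Kd r d.
Proof.
move=> span; apply/andP; split; apply/implyP => _; apply/MC_capK0P => j i;
  rewrite !mem_filter => /andP[ej jI] /andP[ei iI]; apply: span => //; lia.
Qed.

Lemma patch_span_intro r d : Ueq p m K r != [::] ->
  (forall j i, j \in Iset m -> i \in Iset m -> r < e j -> e i = r ->
     (Kd j d <= Kd 0 d * Kd i d)%VS) ->
  (forall j i, j \in Iset m -> i \in Iset m -> e j = r -> e i < r ->
     (Kd j d <= Kd 0 d * Kd i d)%VS) ->
  patch_span r d.
Proof.
move=> /Ueq_witness[k kI ek] above below j i jI iI /andP[eir rej] eij.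
have [ltir | eqir] := ltnP (e i) r; last by apply: above => //; lia.
have [ltrj | eqrj] := ltnP r (e j); last by apply: below => //; lia.
by apply: subv_prodv_trans (above j k _ _ _ _) (below k i _ _ _ _).
Qed.

Lemma patch_cond_span r d : Ueq p m K r != [::] ->
  patch_cond p m K Kd r d -> patch_span r d.
Proof.
move=> Ur /andP[/implyP above /implyP below]; apply: patch_span_intro => // j i jI iI ej ei.
  have jU : j \in Ugt p m K r by rewrite mem_filter ej.
  have iU : i \in Ueq p m K r by rewrite mem_filter ei eqxx.
  by apply: (MC_capK0P _ _ _ (above _)) => //; apply/eqP => U0; rewrite U0 in jU.
have jU : j \in Ueq p m K r by rewrite mem_filter ej eqxx.
have iU : i \in Ult p m K r by rewrite mem_filter ei.
by apply: (MC_capK0P _ _ _ (below _)) => //; apply/eqP => U0; rewrite U0 in iU.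
Qed.

Lemma patch_span_small r d : d <= r -> patch_span r d.
Proof.
move=> dr j i jI iI /andP[_ rej] _.
by rewrite -(Kd0_eq (Iset_le jI)) ?field_subvMr // (leq_trans dr).
Qed.

Lemma patch_span_mono r s d : Ueq p m K r != [::] -> r <= s -> d <= eps 0 ->
  patch_span r d -> patch_span s d.
Proof.
move=> /Ueq_witness[k kI ek] rs dn span j i jI iI /andP[eis sej] eij.
have jm := Iset_le jI; have im := Iset_le iI; have km := Iset_le kI.
have [eir | rei] := leqP (e i) r; first by apply: span => //; lia.
apply: (subv_prodv_Kd0 jm km im dn dn dn dn); first by lia.
  by apply: span => //; lia.
by apply: span => //; lia.
Qed.

Lemma Ueq_not_all r s : Ueq p m K s != [::] -> s != r -> ~~ all (fun i => e i == r) (Iset m).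
Proof. by move=> /Ueq_witness[k kI eks] sr; apply/allPn; exists k; rewrite ?eks. Qed.

Lemma Delta_spec r : Ueq p m K r != [::] -> ~~ all (fun i => e i == r) (Iset m) ->
  [/\ patch_span r (Delta p m K Kd (eps 0) r), r <= Delta p m K Kd (eps 0) r,
       Delta p m K Kd (eps 0) r <= eps 0
     & forall d, d <= eps 0 -> patch_span r d -> d <= Delta p m K Kd (eps 0) r].
Proof.
move=> Ur not_all; rewrite /Delta (negPf not_all).
pose P := [pred d : 'I_(eps 0).+1 | patch_cond p m K Kd r d].
have Dmax d : d <= eps 0 -> patch_span r d -> d <= \max_(d' in P) d'.
  move=> dn /patch_span_cond Pd.
  exact: (@leq_bigmax_cond _ P (fun d' : 'I_(eps 0).+1 => d' : nat)
    (Ordinal (dn : d < (eps 0).+1))).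
have [k kI ek] := Ueq_witness Ur.
have rn : r <= eps 0 by rewrite -ek e_le_eps ?Iset_le.
split.
- have P0 : 0 < #|P| by apply/card_gt0P; exists ord0; apply/patch_span_cond/patch_span_small.
  have [d0 Pd0 ->] := eq_bigmax_cond (fun d : 'I_(eps 0).+1 => d : nat) P0.
  exact: patch_cond_span.
- exact/Dmax/patch_span_small.
- by apply/bigmax_leqP => d _; rewrite -ltnS.
- exact: Dmax.
Qed.

Section Gap.
Variables r r' : nat.
Hypothesis Ur : Ueq p m K r != [::].
Hypothesis Ur' : Ueq p m K r' != [::].
Hypothesis lt_rr' : r < r'.
Hypothesis gap : forall s, r < s < r' -> Ueq p m K s = [::].

Lemma gap_e j : j \in Iset m -> r < e j -> r' <= e j.
Proof.
move=> jI rej; rewrite leqNgt; apply/negP => ejr'.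
have : j \in Ueq p m K (e j) by rewrite mem_filter eqxx.
by rewrite gap ?rej.
Qed.

Lemma patch_span_down0 d : r = 0 -> patch_span r' d -> patch_span r d.
Proof.
move=> r0 span j i jI iI /andP[eir rej] eij; apply: span => //.
by rewrite (gap_e jI) ?andbT; lia.
Qed.

Section Shift.
Variables n d : nat.
Hypotheses (r'_le_n : r' <= n) (n_le_eps : n <= eps 0) (shift_d : d + r' = n + r).
Hypothesis span : patch_span r' n.

Let d_le_n : d <= n. Proof. by lia. Qed.
Let d_le_eps : d <= eps 0. Proof. exact: leq_trans d_le_n n_le_eps. Qed.

Lemma prodv_Kd0_shift i k : i \in Iset m -> k \in Iset m -> e i = r -> e k = r' ->
  (Kd 0 n * Kd i d)%VS = (Kd 0 n * Kd k n)%VS.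
Proof.
move=> iI kI ei ek; have im := Iset_le iI; have km := Iset_le kI.
have sKi : (Kd i d <= Kd 0 n * Kd i n)%VS.
  by apply: subv_trans _ (field_subvMl _ _); rewrite Kd_subv.
have sKk : (Kd k n <= Kd 0 n * Kd i n)%VS by apply: span => //; lia.
have sik : (Kd i d <= Kd 0 n * Kd k n)%VS.
  by apply: (subv_prodv_Kd0 im im km n_le_eps n_le_eps d_le_eps n_le_eps) => //; lia.
have ski : (Kd k n <= Kd 0 n * Kd i d)%VS.
  by apply: (subv_prodv_Kd0 km im im n_le_eps n_le_eps n_le_eps d_le_eps) => //; lia.
apply/eqP; rewrite eqEsubv.
by rewrite (@prodv_sub _ _ _ _ (Kd 0 n * Kd k n)%AS)
  ?(@prodv_sub _ _ _ _ (Kd 0 n * Kd i d)%AS) ?field_subvMr.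
Qed.

Lemma Kd_sub_prodv_shift j i : j \in Iset m -> i \in Iset m -> r' <= e j -> e i = r ->
  (Kd j n <= Kd 0 n * Kd i d)%VS.
Proof.
move=> jI iI r'ej ei; have [k kI ek] := Ueq_witness Ur'.
have [ejr' | r'ltj] := leqP (e j) r'.
  by rewrite (@prodv_Kd0_shift i j) ?field_subvMl //; lia.
by rewrite (prodv_Kd0_shift iI kI ei ek); apply: span => //; lia.
Qed.

Lemma patch_span_shift : patch_span r d.
Proof.
apply: patch_span_intro => // [j i jI iI rej ei | j l jI lI ej elr].
  have jm := Iset_le jI; have im := Iset_le iI.
  rewrite prodvC; apply: (subv_prodv_Kd0_descend im jm d_le_eps d_le_n n_le_eps); first by lia.
  rewrite prodvC; apply: subv_trans (Kd_sub_prodv_shift jI iI (gap_e jI rej) ei).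
  by rewrite Kd_subv.
have jm := Iset_le jI; have lm := Iset_le lI; have [k kI ek] := Ueq_witness Ur'.
have sKkl : (Kd k n <= Kd 0 n * Kd l n)%VS by apply: span => //; lia.
have sMn : (Kd j d <= Kd 0 n * Kd l n)%VS.
  by apply: subv_prodv_trans sKkl; rewrite -(prodv_Kd0_shift jI kI ej ek) field_subvMl.
have sMd : (Kd j d <= Kd l n * Kd 0 d)%VS.
  by apply: (subv_prodv_Kd0_descend lm jm n_le_eps d_le_n n_le_eps); [lia | rewrite prodvC].
apply: (subv_prodv_Kd0 jm lm lm d_le_eps n_le_eps d_le_eps d_le_eps); first by lia.
  by rewrite prodvC.
by apply: subv_trans _ (field_subvMl _ _); rewrite Kd_subv.
Qed.

End Shift.

End Gap.

End CyclicTower.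

Unset Implicit Arguments.
Unset Strict Implicit.

Theorem proposition5p3 (F : fieldType) (L : splittingFieldType F)
  (p m : nat) (K : nat -> {subfield L}) (eps : nat -> nat)
  (Kd : nat -> nat -> {subfield L}) (r r' : nat) :
  prime p -> (2 <= m)%N ->
  (forall i, (i <= m)%N -> galois 1%VS (K i) && cyclic ('Gal(K i / 1%VS))%g) ->
  (forall i, (i <= m)%N -> \dim (K i) = (p ^ eps i)%N) ->
  (forall i, (i <= m)%N -> (eps 0 <= eps i)%N) ->
  (\bigcap_(0 <= i < m.+1) (K i : {vspace L}))%VS = 1%VS ->
  (forall i j, (i <= m)%N -> (j <= m)%N -> i != j -> ~~ (K j <= K i)%VS) ->
  (forall i d, (i <= m)%N -> (d <= eps i)%N ->
     (Kd i d <= K i)%VS /\ \dim (Kd i d) = (p ^ d)%N) ->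
  Ueq p m K r != [::] ->
  Ugt p m K r != [::] ->
  (r < r')%N -> Ueq p m K r' != [::] ->
  (forall s, (r < s < r')%N -> Ueq p m K s = [::]) ->
  [/\ r = 0%N -> Delta p m K Kd (eps 0) r = Delta p m K Kd (eps 0) r',
      (Delta p m K Kd (eps 0) r <= Delta p m K Kd (eps 0) r')%N
    & ((Delta p m K Kd (eps 0%N) r')%:Z - r'%:Z <= (Delta p m K Kd (eps 0%N) r)%:Z - r%:Z)%R].
Proof.
move=> p_prime _ K_cyc dim_K eps0_min _ _ Kd_spec Ur _ lt_rr' Ur' gap.
have tower := Delta_spec p_prime K_cyc dim_K eps0_min Kd_spec.
have [span_r r_le_D D_le D_max] := tower r Ur (Ueq_not_all Ur' (negbT (gtn_eqF lt_rr'))).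
have [span_r' _ D'_le D'_max] := tower r' Ur' (Ueq_not_all Ur (negbT (ltn_eqF lt_rr'))).
have D_le_D' : (Delta p m K Kd (eps 0) r <= Delta p m K Kd (eps 0) r')%N.
  exact/D'_max/(patch_span_mono p_prime K_cyc dim_K eps0_min Kd_spec Ur (ltnW lt_rr') D_le span_r).
have shift : (Delta p m K Kd (eps 0) r' + r <= Delta p m K Kd (eps 0) r + r')%N.
  have [D'_le_r' | r'_lt_D'] := leqP (Delta p m K Kd (eps 0) r') r'; first lia.
  suff : (Delta p m K Kd (eps 0) r' - r' + r <= Delta p m K Kd (eps 0) r)%N by lia.
  apply/D_max/(patch_span_shift p_prime K_cyc dim_K eps0_min Kd_spec Ur Ur' lt_rr' gap
    (ltnW r'_lt_D') D'_le _ span_r'); lia.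
split=> [r0||]; last lia.
- apply/eqP; rewrite eqn_leq D_le_D' D_max //.
  exact: (patch_span_down0 p_prime Ur Ur' lt_rr' gap r0 span_r').
- exact: D_le_D'.
Qed.
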